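(* $\mathcal{S}=\mathcal{F}(0)\supseteq\mathcal{F}(1)\supseteq\mathcal{F}(2)\supseteq\cdots\supseteq\mathcal{F}(\bar{k})=\mathcal{F}$.
   Context: Data: $d^2\in\mathbb{Q}^{n_2}$; $A^1\in\mathbb{Q}^{m_1\times n_1}$, $G^1\in\mathbb{Q}^{m_1\times n_2}$, $b^1\in\mathbb{Q}^{m_1}$; $A^2\in\mathbb{Q}^{m_2\times n_1}$, $G^2\in\mathbb{Q}^{m_2\times n_2}$, $b^2\in\mathbb{Q}^{m_2}$; integers $0\le r_1\le n_1$, $0\le r_2\le n_2$. Let $X=\mathbb{Z}_+^{r_1}\times\mathbb{R}_+^{n_1-r_1}$, $Y=\mathbb{Z}_+^{r_2}\times\mathbb{R}_+^{n_2-r_2}$, $\mathcal{P}_1(x)=\{y\in\mathbb{R}_+^{n_2}: G^1y\ge b^1-A^1x\}$, $\mathcal{P}_2(x)=\{y\in\mathbb{R}_+^{n_2}: G^2y\ge b^2-A^2x\}$, $\mathcal{P}=\{(x,y)\in\mathbb{R}_+^{n_1}\times\mathbb{R}_+^{n_2}: y\in\mathcal{P}_1(x)\cap\mathcal{P}_2(x)\}$, $\mathcal{S}=\mathcal{P}\cap(X\times Y)$. Standing assumptions: $\mathcal{P}$ is bounded; leader variables appearing in the follower's constraints are integer; $A^2x+G^2y-b^2\in\mathbb{Z}^{m_2}$ for all $(x,y)\in\mathcal{S}$ and $d^2\in\mathbb{Z}^{n_2}$. For $x\in X$ let $\mathcal{S}(x)=Y\cap\mathcal{P}_1(x)\cap\mathcal{P}_2(x)$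 and $\mathcal{R}(x)=\{y\in\mathcal{S}(x): d^2y\le d^2\bar{y}\ \forall\bar{y}\in\mathcal{S}(x)\}$; $\mathcal{F}=\{(x,y): x\in X,\ y\in\mathcal{R}(x)\}$. For $y\in Y$ and integer $k\ge0$, $\mathcal{N}_k(y)=\{\bar{y}\in Y:\|\bar{y}-y\|_1\le k\}$, $\mathcal{R}(x;k)=\{y\in\mathcal{S}(x): d^2y\le d^2\bar{y}\ \forall\bar{y}\in\mathcal{N}_k(y)\cap\mathcal{S}(x)\}$, and $\mathcal{F}(k)=\{(x,y): x\in X,\ y\in\mathcal{R}(x;k)\}$. Finally $\bar{k}=\sum_{i=1}^{r_2}\left(\left\lfloor\max_{(x,y)\in\mathcal{P}}y_i\right\rfloor-\left\lceil\min_{(x,y)\in\mathcal{P}}y_i\right\rceil\right)+\sum_{i=r_2+1}^{n_2}\left\lceil\max_{(x,y)\in\mathcal{P}}y_i-\min_{(x,y)\in\mathcal{P}}y_i\right\rceil$. *)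

From HB Require Import structures.
From mathcomp Require Import all_boot all_order all_algebra.
From mathcomp Require Import classical_sets reals.
Set Implicit Arguments. Unset Strict Implicit. Unset Printing Implicit Defensive.
Import Order.TTheory GRing.Theory Num.Theory.
Local Open Scope ring_scope.
Local Open Scope classical_set_scope.

(* Vectors are column vectors 'cV[R]_n over an arbitrary real type R
   (the paper uses R = the reals); rational data is embedded by ratr. *)
Section Bilevel.
Variables (R : realType) (n1 n2 m1 m2 r1 r2 : nat).
Variables (d2 : 'cV[rat]_n2)
  (A1 : 'M[rat]_(m1, n1)) (G1 : 'M[rat]_(m1, n2)) (b1 : 'cV[rat]_m1)
  (A2 : 'M[rat]_(m2, n1)) (G2 : 'M[rat]_(m2, n2)) (b2 : 'cV[rat]_m2).

Definition rmx m n (M : 'M[rat]_(m, n)) : 'M[R]_(m, n) := map_mx ratr M.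

Definition nonneg n (v : 'cV[R]_n) : Prop := forall i, 0 <= v i 0.

Definition inX (x : 'cV[R]_n1) : Prop :=
  nonneg x /\ forall i : 'I_n1, (i < r1)%N -> x i 0 \is a Num.int.
Definition inY (y : 'cV[R]_n2) : Prop :=
  nonneg y /\ forall i : 'I_n2, (i < r2)%N -> y i 0 \is a Num.int.

Definition inP1 (x : 'cV[R]_n1) (y : 'cV[R]_n2) : Prop :=
  nonneg y /\ forall i, (rmx b1 - rmx A1 *m x) i 0 <= (rmx G1 *m y) i 0.
Definition inP2 (x : 'cV[R]_n1) (y : 'cV[R]_n2) : Prop :=
  nonneg y /\ forall i, (rmx b2 - rmx A2 *m x) i 0 <= (rmx G2 *m y) i 0.

Definition Pset : set ('cV[R]_n1 * 'cV[R]_n2) :=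
  [set xy | nonneg xy.1 /\ nonneg xy.2 /\ inP1 xy.1 xy.2 /\ inP2 xy.1 xy.2].

Definition Sset : set ('cV[R]_n1 * 'cV[R]_n2) :=
  [set xy | Pset xy /\ inX xy.1 /\ inY xy.2].

Definition Sx (x : 'cV[R]_n1) : set 'cV[R]_n2 :=
  [set y | inY y /\ inP1 x y /\ inP2 x y].

Definition obj2 (y : 'cV[R]_n2) : R := \sum_i ratr (d2 i 0) * y i 0.

Definition Rx (x : 'cV[R]_n1) : set 'cV[R]_n2 :=
  [set y | Sx x y /\ forall yb, Sx x yb -> obj2 y <= obj2 yb].

Definition Fset : set ('cV[R]_n1 * 'cV[R]_n2) :=
  [set xy | inX xy.1 /\ Rx xy.1 xy.2].

Definition norm1 (y : 'cV[R]_n2) : R := \sum_i `|y i 0|.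

Definition Nk (k : int) (y : 'cV[R]_n2) : set 'cV[R]_n2 :=
  [set yb | inY yb /\ norm1 (yb - y) <= k%:~R].

Definition Rxk (x : 'cV[R]_n1) (k : int) : set 'cV[R]_n2 :=
  [set y | Sx x y /\ forall yb, Nk k y yb -> Sx x yb -> obj2 y <= obj2 yb].

Definition Fk (k : int) : set ('cV[R]_n1 * 'cV[R]_n2) :=
  [set xy | inX xy.1 /\ Rxk xy.1 k xy.2].

(* max / min of y_i over P (P is bounded, so these are sup / inf) *)
Definition ymax (i : 'I_n2) : R := sup [set xy.2 i 0 | xy in Pset].
Definition ymin (i : 'I_n2) : R := inf [set xy.2 i 0 | xy in Pset].

Definition kbar : int :=
  \sum_(i < n2 | (i < r2)%N) (Num.floor (ymax i) - Num.ceil (ymin i))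
  + \sum_(i < n2 | ~~ (i < r2)%N) Num.ceil (ymax i - ymin i).

End Bilevel.

From HB Require Import structures.
From mathcomp Require Import all_boot all_order all_algebra.
From mathcomp Require Import classical_sets reals.
From mathcomp Require Import lra.
Import Order.TTheory GRing.Theory Num.Theory.
Local Open Scope ring_scope.
Local Open Scope classical_set_scope.

(* The chain is monotone because enlarging the neighbourhood only adds
   competitors, and F(0) = S because N_0(y) = {y}.  For k = kbar the
   neighbourhood already contains every follower-feasible point: two points
   of S(x) lie in the projection of the bounded set P on each coordinate, so
   their distance in coordinate i is at most floor(max y_i) - ceil(min y_i)
   when y_i is integer and ceil(max y_i - min y_i) otherwise. *)

Section IntervalDistance.
Variable R : archiRealDomainType.

Lemma ceil_le_intr {lo a : R} : a \is a Num.int -> lo <= a -> (Num.ceil lo)%:~R <= a.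
Proof. by move=> ia le_lo_a; rewrite -(floorK ia) ler_int ceil_le_int floorK. Qed.

Lemma intr_le_floor {hi a : R} : a \is a Num.int -> a <= hi -> a <= (Num.floor hi)%:~R.
Proof. by move=> ia le_a_hi; rewrite -(floorK ia) ler_int floor_ge_int floorK. Qed.

Lemma int_dist_le_floor_ceil (lo hi a b : R) :
  a \is a Num.int -> b \is a Num.int -> lo <= a <= hi -> lo <= b <= hi ->
  `|a - b| <= (Num.floor hi - Num.ceil lo)%:~R.
Proof.
move=> ia ib /andP[loa ahi] /andP[lob bhi].
have := ceil_le_intr ia loa; have := ceil_le_intr ib lob.
have := intr_le_floor ia ahi; have := intr_le_floor ib bhi.
by rewrite intrB ler_norml => *; apply/andP; split; lra.
Qed.

Lemma dist_le_ceil (lo hi a b : R) :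
  lo <= a <= hi -> lo <= b <= hi -> `|a - b| <= (Num.ceil (hi - lo))%:~R.
Proof.
move=> /andP[loa ahi] /andP[lob bhi]; apply: le_trans (ceil_ge _).
by rewrite ler_norml; apply/andP; split; lra.
Qed.

End IntervalDistance.

Lemma norm1_le0 (R : realType) n (y : 'cV[R]_n) : norm1 y <= 0 -> y = 0.
Proof.
move=> y_le0; apply/matrixP => i j; rewrite (ord1 j) mxE; apply/eqP.
rewrite -normr_eq0 eq_le normr_ge0 andbT; apply: le_trans y_le0.
by rewrite /norm1 (bigD1 i) //= lerDl sumr_ge0.
Qed.

Section Chain.
Variables (R : realType) (n1 n2 m1 m2 r1 r2 : nat) (d2 : 'cV[rat]_n2)
  (A1 : 'M[rat]_(m1, n1)) (G1 : 'M[rat]_(m1, n2)) (b1 : 'cV[rat]_m1)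
  (A2 : 'M[rat]_(m2, n1)) (G2 : 'M[rat]_(m2, n2)) (b2 : 'cV[rat]_m2).

Local Notation Pset := (@Pset R n1 n2 m1 m2 A1 G1 b1 A2 G2 b2).
Local Notation Sset := (@Sset R n1 n2 m1 m2 r1 r2 A1 G1 b1 A2 G2 b2).
Local Notation Sx := (@Sx R n1 n2 m1 m2 r2 A1 G1 b1 A2 G2 b2).
Local Notation Nk := (@Nk R n2 r2).
Local Notation Fset := (@Fset R n1 n2 m1 m2 r1 r2 d2 A1 G1 b1 A2 G2 b2).
Local Notation Fk := (@Fk R n1 n2 m1 m2 r1 r2 d2 A1 G1 b1 A2 G2 b2).
Local Notation ymin := (@ymin R n1 n2 m1 m2 A1 G1 b1 A2 G2 b2).
Local Notation ymax := (@ymax R n1 n2 m1 m2 A1 G1 b1 A2 G2 b2).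
Local Notation kbar := (@kbar R n1 n2 m1 m2 r2 A1 G1 b1 A2 G2 b2).

Lemma Nk0_eq (y yb : 'cV[R]_n2) : Nk 0 y yb -> yb = y.
Proof. by case=> _ /norm1_le0 /eqP; rewrite subr_eq0 => /eqP. Qed.

Lemma Sset_Fk0 : Sset = Fk 0.
Proof.
apply/seteqP; split=> -[x y] /=.
  by move=> [[_ [_ [P1y P2y]]] [Xx Yy]]; split=> //; split=> // yb /Nk0_eq ->.
move=> [Xx [[Yy [P1y P2y]] _]]; split=> //.
by split; [case: Xx | split; [case: Yy | by []]].
Qed.

Lemma Fk_le (k l : int) : k <= l -> Fk l `<=` Fk k.
Proof.
move=> le_kl [x y] /= [Xx [Sy y_opt]]; split=> //; split=> // yb [Yyb dist] Syb.
by apply: y_opt => //; split=> //; apply: le_trans dist _; rewrite ler_int.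
Qed.

Lemma Sx_Pset {x : 'cV[R]_n1} {y : 'cV[R]_n2} : nonneg x -> Sx x y -> Pset (x, y).
Proof. by move=> nx [[ny _] [P1y P2y]]. Qed.

Hypothesis P_bounded :
  exists M : R, forall xy, Pset xy -> forall j, `|xy.2 j 0| <= M.

Lemma Pset_coord_bounds {xy} j : Pset xy -> ymin j <= xy.2 j 0 <= ymax j.
Proof.
have [M PM] := P_bounded; move=> Pxy.
have bound_M xy' : Pset xy' -> - M <= xy'.2 j 0 <= M.
  by move/PM/(_ j); rewrite ler_norml.
apply/andP; split.
  apply: ge_inf; last by exists xy.
  by exists (- M) => _ [xy' /bound_M /andP[M_le _] <-].
apply: ub_le_sup; last by exists xy.
by exists M => _ [xy' /bound_M /andP[_ le_M] <-].
Qed.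

Lemma norm1_le_kbar {x : 'cV[R]_n1} {y yb : 'cV[R]_n2} :
  nonneg x -> Sx x y -> Sx x yb -> norm1 (yb - y) <= kbar%:~R.
Proof.
move=> nx Sy Syb.
have bounds_y := fun j => Pset_coord_bounds j (Sx_Pset nx Sy).
have bounds_yb := fun j => Pset_coord_bounds j (Sx_Pset nx Syb).
rewrite /norm1 /kbar rmorphD !rmorph_sum /=.
rewrite (bigID (fun i : 'I_n2 => (i < r2)%N)) /=.
apply: lerD; apply: ler_sum => i lt_i_r2; rewrite !mxE.
  have [[_ int_yb] _] := Syb; have [[_ int_y] _] := Sy.
  exact: int_dist_le_floor_ceil (int_yb i lt_i_r2) (int_y i lt_i_r2)
    (bounds_yb i) (bounds_y i).
exact: dist_le_ceil (bounds_yb i) (bounds_y i).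
Qed.

Lemma Fk_kbar : Fk kbar = Fset.
Proof.
apply/seteqP; split=> -[x y] /= [Xx [Sy y_opt]]; split=> //; split=> //.
  move=> yb Syb; apply: y_opt => //; split; first by case: Syb.
  by apply: norm1_le_kbar Sy Syb; case: Xx.
by move=> yb _; apply: y_opt.
Qed.

End Chain.

Theorem theorem1 (R : realType) (n1 n2 m1 m2 r1 r2 : nat)
  (d2 : 'cV[rat]_n2)
  (A1 : 'M[rat]_(m1, n1)) (G1 : 'M[rat]_(m1, n2)) (b1 : 'cV[rat]_m1)
  (A2 : 'M[rat]_(m2, n1)) (G2 : 'M[rat]_(m2, n2)) (b2 : 'cV[rat]_m2)
  (Hr1 : (r1 <= n1)%N) (Hr2 : (r2 <= n2)%N)
  (* P is bounded *)
  (Hbnd : exists M : R, forall xy, @Pset R n1 n2 m1 m2 A1 G1 b1 A2 G2 b2 xy ->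
      (forall i, `|xy.1 i 0| <= M) /\ (forall j, `|xy.2 j 0| <= M))
  (* leader variables appearing in the follower's constraints are integer *)
  (Hlead : forall (i : 'I_m2) (j : 'I_n1), A2 i j != 0 -> (j < r1)%N)
  (* A^2 x + G^2 y - b^2 is integral on S *)
  (Hint : forall xy, @Sset R n1 n2 m1 m2 r1 r2 A1 G1 b1 A2 G2 b2 xy ->
      forall i, (@rmx R _ _ A2 *m xy.1 + @rmx R _ _ G2 *m xy.2 - @rmx R _ _ b2) i 0 \is a Num.int)
  (* d^2 is integral *)
  (Hd2 : forall j, d2 j 0 \is a Num.int) :
  @Sset R n1 n2 m1 m2 r1 r2 A1 G1 b1 A2 G2 b2 = @Fk R n1 n2 m1 m2 r1 r2 d2 A1 G1 b1 A2 G2 b2 0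
  /\ (forall k : nat,
        @Fk R n1 n2 m1 m2 r1 r2 d2 A1 G1 b1 A2 G2 b2 (k.+1)%:Z
        `<=` @Fk R n1 n2 m1 m2 r1 r2 d2 A1 G1 b1 A2 G2 b2 k%:Z)
  /\ @Fk R n1 n2 m1 m2 r1 r2 d2 A1 G1 b1 A2 G2 b2 (@kbar R n1 n2 m1 m2 r2 A1 G1 b1 A2 G2 b2)
     = @Fset R n1 n2 m1 m2 r1 r2 d2 A1 G1 b1 A2 G2 b2.
Proof.
have y_bounded : exists M : R, forall xy,
    @Pset R n1 n2 m1 m2 A1 G1 b1 A2 G2 b2 xy -> forall j, `|xy.2 j 0| <= M.
  by have [M HM] := Hbnd; exists M => xy /HM[].
split; first exact: Sset_Fk0.
split; first by move=> k; apply: Fk_le; rewrite lez_nat.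
exact: Fk_kbar y_bounded.
Qed.
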